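(* There is a function $f:(0,\infty)\to\mathbb{N}$ such that if $G=H^t$ is a direct product of $t$ copies of a non-nilpotent finite group $H$ and $\mathrm{pr}^*(G)\ge\epsilon>0$, then $t\le f(\epsilon)$.
   Context: For subsets $X,Y$ of a finite group, $\Pr(X,Y)=|\{(x,y)\in X\times Y: xy=yx\}|/(|X||Y|)$. $\mathrm{pr}^*(G)$ is the maximum real number $\epsilon$ such that for every pair of distinct primes $p,q$ dividing $|G|$ there exist a Sylow $p$-subgroup $P$ and a Sylow $q$-subgroup $Q$ of $G$ with $\Pr(P,Q)\ge\epsilon$. *)

From mathcomp Require Import all_boot all_order all_algebra all_fingroup all_solvable.
From mathcomp Require Import reals.
Set Implicit Arguments. Unset Strict Implicit. Unset Printing Implicit Defensive.
Import Order.TTheory GRing.Theory Num.Theory.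
Local Open Scope ring_scope.
Local Open Scope group_scope.

Definition commProb (R : realType) (gT : finGroupType) (X Y : {set gT}) : R :=
  (#|[set xy in setX X Y | ((xy.1 * xy.2)%g == (xy.2 * xy.1)%g)]|%:R
    / (#|X| * #|Y|)%:R)%R.

(* pr*(G): the largest eps such that for every pair of distinct primes p, q
   dividing |G| some Sylow p-subgroup P and Sylow q-subgroup Q satisfy
   Pr(P,Q) >= eps; i.e. min over pairs (p,q) of max over (P,Q) of Pr(P,Q).
   Convention: 1 if there is no such pair (irrelevant for the theorem). *)
Definition prstar (R : realType) (gT : finGroupType) (G : {set gT}) : R :=
  \big[Num.min/1%R]_(p <- primes #|G|)
   \big[Num.min/1%R]_(q <- primes #|G| | q != p)
    \big[Num.max/0%R]_(P in 'Syl_p(G))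
     \big[Num.max/0%R]_(Q in 'Syl_q(G)) commProb R P Q.

From mathcomp Require Import all_boot all_order all_algebra.
From mathcomp Require Import all_fingroup all_solvable.
From mathcomp Require Import reals zify lra.
From Stdlib Require Import Classical.
Set Implicit Arguments. Unset Strict Implicit. Unset Printing Implicit Defensive.
Import Order.TTheory GRing.Theory Num.Theory.

(* Sylow subgroups for distinct primes that can be chosen to commute make every
   normaliser of a Sylow subgroup contain a Sylow subgroup for each prime, so
   all Sylow subgroups are normal and the group is nilpotent. Hence the
   non-nilpotent H has primes p <> q such that no Sylow p-subgroup of H
   centralises a Sylow q-subgroup, and such a pair commutes with probability at
   most 3/4, because a proper subgroup has index at least 2. Sylow subgroups of
   H^t are products of Sylow subgroups of the factors and the commuting
   probability is multiplicative over direct factors, so all Sylow p- and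
   q-subgroups of H^t commute with probability at most (3/4)^t. Thus
   eps <= (3/4)^t, and t (3/4)^t <= 3 gives t <= 3 / eps. *)

Section CommutingSylows.
Local Open Scope group_scope.
Variable gT : finGroupType.
Implicit Types K N P : {group gT}.

Definition commuting_Sylows (K : {set gT}) p q :=
  exists P Q : {group gT}, [/\ p.-Sylow(K) P, q.-Sylow(K) Q & P \subset 'C(Q)].

Lemma Sylows_sub_eq K N :
  N \subset K ->
  (forall r, prime r -> exists2 S : {group gT}, r.-Sylow(K) S & S \subset N) ->
  N :=: K.
Proof.
move=> sNK sylN; apply: index1g sNK _; apply/eqP.
rewrite eqn_leq indexg_gt0 andbT leqNgt; apply/negP => /pdiv_prime r_pr.
have [S sylS sSN] := sylN _ r_pr; case/and3P: sylS => _ _ r'KS.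
have := pnat_dvd (indexgS K sSN) r'KS.
by rewrite p'natE // pdiv_dvd.
Qed.

Lemma normal_Sylow_of_commuting K P p :
  prime p -> p.-Sylow(K) P ->
  (forall q, prime q -> q != p -> commuting_Sylows K p q) -> P <| K.
Proof.
move=> p_pr sylP cPq; rewrite /normal (pHall_sub sylP); apply/setIidPl.
apply: Sylows_sub_eq (subsetIl _ _) _ => r r_pr.
have [-> | rp] := eqVneq r p.
  by exists P => //; rewrite subsetI (pHall_sub sylP) normG.
have [P0 [Q0 [sylP0 sylQ0 cP0Q0]]] := cPq r r_pr rp.
have [x Kx defP] := Sylow_trans sylP0 sylP.
have sylQ : r.-Sylow(K) (Q0 :^ x) by rewrite pHallJ.
exists (Q0 :^ x)%G; rewrite // subsetI (pHall_sub sylQ) defP /=.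
by apply: subset_trans (cent_sub _); rewrite centJ conjSg centsC.
Qed.

Lemma nilpotent_of_commuting_Sylows K :
  (forall p q, prime p -> prime q -> p != q -> commuting_Sylows K p q) ->
  nilpotent K.
Proof.
move=> cK; apply: nilpotentS (Fitting_nil K).
rewrite -{1}(Sylow_gen K) gen_subG; apply/bigcupsP => P /SylowP[p p_pr sylP].
apply: Fitting_max (pgroup_nil (pHall_pgroup sylP)).
apply: (normal_Sylow_of_commuting p_pr sylP) => q q_pr qp.
by apply: cK; rewrite 1?eq_sym.
Qed.

Lemma pi_of_not_commuting_Sylows K p q :
  ~ commuting_Sylows K p q -> p \in \pi(K) /\ q \in \pi(K).
Proof.
move=> ncK; have [P sylP] := Sylow_exists p K; have [Q sylQ] := Sylow_exists q K.
have piK r (S : {group gT}) : r.-Sylow(K) S -> S :!=: 1 -> r \in \pi(K).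
  move=> sylS ntS; have [r_pr rS _] := pgroup_pdiv (pHall_pgroup sylS) ntS.
  by apply: (piSg (pHall_sub sylS)); rewrite mem_primes r_pr cardG_gt0.
split; [apply: (piK _ _ sylP) | apply: (piK _ _ sylQ)]; apply/eqP => S1;
  by apply: ncK; exists P, Q; split; rewrite // S1 (sub1G, cents1).
Qed.

End CommutingSylows.

Lemma commuting_Sylows_isog (gT hT : finGroupType)
    (K : {group gT}) (H : {group hT}) p q :
  K \isog H -> commuting_Sylows K p q -> commuting_Sylows H p q.
Proof.
case/isogP => f injf <- [P [Q [sylP sylQ cPQ]]].
exists (f @* P)%G, (f @* Q)%G.
split; [exact: morphim_pSylow (pHall_sub sylP) sylP |
        exact: morphim_pSylow (pHall_sub sylQ) sylQ | exact: morphim_cents].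
Qed.

Section CommutingPairs.
Local Open Scope group_scope.
Variable gT : finGroupType.
Implicit Types X Y : {set gT}.

Definition ncomm X Y : nat := \sum_(x in X) \sum_(y in Y) (x * y == y * x)%g.

Lemma card_commuting_pairs X Y :
  #|[set xy in setX X Y | xy.1 * xy.2 == xy.2 * xy.1]| = ncomm X Y.
Proof.
rewrite -sum1_card /ncomm pair_big_dep /= big_mkcond [RHS]big_mkcond /=.
apply: eq_bigr => -[x y] _; rewrite !inE /=.
by case: (x \in X); case: (y \in Y); case: (_ == _).
Qed.

Lemma ncommE X Y : ncomm X Y = \sum_(x in X) #|'C_Y[x]|.
Proof.
apply: eq_bigr => x _; rewrite -sum1_card big_mkcond [RHS]big_mkcond /=.
by apply: eq_bigr => y _; rewrite in_setI cent1E eq_sym; case: (y \in Y).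
Qed.

Lemma ncomm_le X Y : (ncomm X Y <= #|X| * #|Y|)%N.
Proof.
rewrite ncommE -sum_nat_const; apply: leq_sum => x _.
by rewrite subset_leq_card ?subsetIl.
Qed.

Lemma mul2_card_proper (H K : {group gT}) : H \proper K -> (2 * #|H| <= #|K|)%N.
Proof.
case/andP => sHK nsKH.
by rewrite -(Lagrange sHK) mulnC leq_mul2l indexg_gt1 nsKH orbT.
Qed.

Lemma ncomm_noncent (X Y : {group gT}) :
  ~~ (X \subset 'C(Y)) -> (4 * ncomm X Y <= 3 * (#|X| * #|Y|))%N.
Proof.
move=> ncXY; have sZX : 'C_X(Y) \subset X := subsetIl _ _.
have Z_half : (2 * #|'C_X(Y)| <= #|X|)%N.
  by apply: mul2_card_proper; rewrite properE sZX subsetI subxx.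
have sum_Z : \sum_(x in 'C_X(Y)) #|'C_Y[x]| = (#|'C_X(Y)| * #|Y|)%N.
  rewrite -sum_nat_const; apply: eq_bigr => x /setIP[_ cYx].
  by rewrite (setIidPl _) // sub_cent1.
rewrite ncommE (big_setID 'C_X(Y)) /= (setIidPr sZX) sum_Z.
set S := \sum_(x in X :\: _) _.
have S_half : (2 * S <= (#|X| - #|'C_X(Y)|) * #|Y|)%N.
  rewrite -(cardsID 'C_X(Y) X) (setIidPr sZX) addKn big_distrr /=.
  rewrite -sum_nat_const; apply: leq_sum => x /setDP[Xx Z'x].
  apply: mul2_card_proper; rewrite properE subsetIl subsetI subxx sub_cent1.
  by rewrite inE Xx in Z'x.
(* lia would not identify the differently elaborated copies of the cardinals *)
clearbody S; move: #|X| #|Y| #|'C_X(Y)| Z_half S_half => x y z; nia.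
Qed.

Section DirectProduct.
Variables K L G : {group gT}.
Hypothesis dKL : K \x L = G.

Lemma eq_mulg_dprod x1 y1 x2 y2 :
  x1 \in K -> y1 \in K -> x2 \in L -> y2 \in L ->
  (x1 * x2 == y1 * y2) = (x1 == y1) && (x2 == y2).
Proof.
have [_ _ _ tiKL] := dprodP dKL.
move=> Kx1 Ky1 Lx2 Ly2; apply/eqP/andP => [e | [/eqP-> /eqP->]] //.
split; apply/eqP.
  by have := congr1 (divgr K L) e; rewrite !divgrMid.
by have := congr1 (remgr K L) e; rewrite !remgrMid.
Qed.

Lemma sum_mul_dprod X1 X2 (F : gT -> nat) :
  X1 \subset K -> X2 \subset L ->
  \sum_(z in X1 * X2) F z = \sum_(x1 in X1) \sum_(x2 in X2) F (x1 * x2)%g.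
Proof.
move=> sX1K sX2L; rewrite -imset_mulgm big_imset /=.
  by rewrite pair_big_dep; apply: eq_big => -[x1 x2] //=; rewrite inE.
move=> [x1 x2] [y1 y2] /setXP[X1x1 X2x2] /setXP[X1y1 X2y2] /= /eqP.
rewrite eq_mulg_dprod ?(subsetP sX1K, subsetP sX2L) //.
by case/andP=> /eqP-> /eqP->.
Qed.

Lemma card_mul_dprod X1 X2 :
  X1 \subset K -> X2 \subset L -> #|X1 * X2| = (#|X1| * #|X2|)%N.
Proof.
move=> sX1K sX2L; rewrite -[LHS]sum1_card sum_mul_dprod // -sum_nat_const.
by apply: eq_bigr => x1 _; rewrite sum1_card.
Qed.

Lemma ncomm_dprod X1 Y1 X2 Y2 :
  X1 \subset K -> Y1 \subset K -> X2 \subset L -> Y2 \subset L ->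
  ncomm (X1 * X2) (Y1 * Y2) = (ncomm X1 Y1 * ncomm X2 Y2)%N.
Proof.
move=> sX1K sY1K sX2L sY2L; have [_ _ cKL _] := dprodP dKL.
have swap a1 b1 a2 b2 : a2 \in K -> b1 \in L ->
    a1 * b1 * (a2 * b2) = a1 * a2 * (b1 * b2).
  move=> Ka2 Lb1.
  by rewrite -!mulgA (mulgA b1) (centsP cKL b1 Lb1 a2 Ka2) !mulgA.
rewrite /ncomm sum_mul_dprod // big_distrlr /=; apply: eq_bigr => x1 X1x1.
apply: eq_bigr => x2 X2x2; rewrite sum_mul_dprod // big_distrlr /=.
apply: eq_bigr => y1 Y1y1; apply: eq_bigr => y2 Y2y2.
have [Kx1 Ky1] := (subsetP sX1K _ X1x1, subsetP sY1K _ Y1y1).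
have [Lx2 Ly2] := (subsetP sX2L _ X2x2, subsetP sY2L _ Y2y2).
rewrite (swap x1 x2 y1 y2) ?(swap y1 y2 x1 x2) // eq_mulg_dprod ?groupM //.
by do 2!case: (_ == _).
Qed.

Lemma Sylow_dprod p (P : {group gT}) :
  p.-Sylow(G) P ->
  [/\ (K :&: P) * (L :&: P) = P, p.-Sylow(K) (K :&: P) & p.-Sylow(L) (L :&: P)].
Proof.
move=> sylP; have [nKG nLG] := dprod_normal2 dKL.
have sylKP := Sylow_setI_normal nKG sylP.
have sylLP := Sylow_setI_normal nLG sylP.
split=> //; apply/eqP; rewrite eqEcard mul_subG ?subsetIr //=.
rewrite card_mul_dprod ?subsetIl // (card_Hall sylKP) (card_Hall sylLP).
by rewrite -partnM ?cardG_gt0 // (dprod_card dKL) (card_Hall sylP).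
Qed.

End DirectProduct.
End CommutingPairs.

Section CommutingProbability.
Local Open Scope group_scope.
Local Open Scope ring_scope.
Variables (R : realType) (gT : finGroupType).
Implicit Types X Y : {set gT}.

Lemma commProbE X Y : commProb R X Y = (ncomm X Y)%:R / (#|X| * #|Y|)%:R.
Proof. by rewrite /commProb card_commuting_pairs. Qed.

Lemma commProb_ge0 X Y : 0 <= commProb R X Y.
Proof. by rewrite commProbE divr_ge0. Qed.

Lemma commProb_le1 (X Y : {group gT}) : commProb R X Y <= 1.
Proof.
rewrite commProbE ler_pdivrMr ?mul1r ?ler_nat ?ncomm_le //.
by rewrite ltr0n muln_gt0 !cardG_gt0.
Qed.

Lemma commProb_noncent (X Y : {group gT}) :
  ~~ (X \subset 'C(Y))%g -> commProb R X Y <= 3 / 4.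
Proof.
move=> ncXY; rewrite commProbE ler_pdivrMr ?ltr0n ?muln_gt0 ?cardG_gt0 //.
by rewrite mulrAC ler_pdivlMr // -!natrM ler_nat mulnC ncomm_noncent.
Qed.

Lemma commProb_dprod (K L G : {group gT}) X1 Y1 X2 Y2 :
  (K \x L = G)%g ->
  X1 \subset K -> Y1 \subset K -> X2 \subset L -> Y2 \subset L ->
  commProb R (X1 * X2)%g (Y1 * Y2)%g = commProb R X1 Y1 * commProb R X2 Y2.
Proof.
move=> dKL sX1K sY1K sX2L sY2L.
rewrite !commProbE (ncomm_dprod dKL) // !(card_mul_dprod dKL) //.
by rewrite mulf_div -!natrM mulnACA.
Qed.

Lemma commProb_Sylow_bigdprod t (Hs : 'I_t -> {group gT}) (G P Q : {group gT})
    p q :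
  (\big[dprod/1]_(i < t) Hs i)%g = G ->
  (forall i, ~ commuting_Sylows (Hs i) p q) ->
  p.-Sylow(G) P -> q.-Sylow(G) Q -> commProb R P Q <= (3 / 4) ^+ t.
Proof.
elim: t Hs G P Q => [|t IHt] Hs G P Q.
  by rewrite expr0 => *; apply: commProb_le1.
rewrite big_ord_recr /= => dG ncHs sylP sylQ.
have [[K L defK _] _ _ _] := dprodP dG.
have dKL : K \x Hs ord_max = G by rewrite -defK.
have [defP sylKP sylLP] := Sylow_dprod dKL sylP.
have [defQ sylKQ sylLQ] := Sylow_dprod dKL sylQ.
rewrite -defP -defQ (commProb_dprod dKL) ?subsetIl // exprSr.
apply: ler_pM; rewrite ?commProb_ge0 //.
  exact: IHt (fun i => ncHs (widen_ord _ i)) sylKP sylKQ.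
apply: commProb_noncent; apply/negP => cPQ; apply: (ncHs ord_max).
by exists (Hs ord_max :&: P)%G, (Hs ord_max :&: Q)%G.
Qed.

Lemma prstar_le (G : {group gT}) p q b :
  p \in \pi(G) -> q \in \pi(G) -> q != p -> 0 <= b ->
  (forall P Q : {group gT},
     p.-Sylow(G) P -> q.-Sylow(G) Q -> commProb R P Q <= b) ->
  prstar R G <= b.
Proof.
move=> piGp piGq qp b_ge0 le_b.
apply: (bigmin_inf_seq _ p) => //; apply: (bigmin_inf_seq _ q) => //.
apply: bigmax_le => // P; rewrite inE => sylP.
by apply: bigmax_le => // Q; rewrite inE; apply: le_b.
Qed.

End CommutingProbability.

Local Open Scope ring_scope.

Lemma natr_mul_exp_3_4_le (F : realFieldType) t : t%:R * (3 / 4) ^+ t <= 3 :> F.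
Proof.
have x_ge0 n : 0 <= (3 / 4) ^+ n :> F by apply: exprn_ge0; rewrite divr_ge0.
suff: (t%:R + 3) * (3 / 4) ^+ t <= 3 :> F.
  by apply: le_trans; apply: ler_wpM2r; rewrite ?lerDl.
elim: t => [|t IHt]; first by rewrite expr0 mulr1 add0r.
rewrite exprS -natr1; move: IHt (mulr_ge0 (ler0n F t) (x_ge0 t)).
set x := (3 / 4) ^+ t; lra.
Qed.

Theorem lemma4p2 (R : realType) :
  exists f : R -> nat,
  forall (hT gT : finGroupType) (H : {group hT}) (G : {group gT})
         (t : nat) (Hs : 'I_t -> {group gT}) (eps : R),
    ~~ nilpotent H ->
    (\big[dprod/1]_(i < t) Hs i)%g = G ->
    (forall i, Hs i \isog H) ->
    (0 < eps)%R ->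
    (eps <= prstar R G)%R ->
    (t <= f eps)%N.
Proof.
exists (fun eps => Num.truncn (3 / eps)).
move=> hT gT H G t Hs eps nilH dG isoH eps_gt0 eps_le.
have [p [q [p_pr q_pr pq ncH]]] :
    exists p q, [/\ prime p, prime q, p != q & ~ commuting_Sylows H p q].
  apply: NNPP => cH; apply: (negP nilH); apply: nilpotent_of_commuting_Sylows.
  by move=> p q p_pr q_pr pq; apply: NNPP => ncH; apply: cH; exists p, q.
have ncHs i : ~ commuting_Sylows (Hs i) p q.
  by move=> cHi; apply: ncH (commuting_Sylows_isog (isoH i) cHi).
have [-> // | t_gt0] := posnP t; pose i0 := Ordinal t_gt0.
have sHG : (Hs i0 \subset G)%g.
  by rewrite -(bigdprodWY dG) sub_gen // (bigcup_sup i0).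
have [piHp piHq] := pi_of_not_commuting_Sylows (ncHs i0).
have eps_le34 : eps <= (3 / 4) ^+ t.
  apply: le_trans eps_le (prstar_le (piSg sHG piHp) (piSg sHG piHq) _ _ _).
  - by rewrite eq_sym.
  - by rewrite exprn_ge0 ?divr_ge0.
  - by move=> P Q; apply: commProb_Sylow_bigdprod dG ncHs.
rewrite truncn_ge_nat ?divr_ge0 ?(ltW eps_gt0) // ler_pdivlMr //.
by apply: le_trans (natr_mul_exp_3_4_le _ t); rewrite ler_wpM2l.
Qed.
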